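(* For all integers $n\ge 0$ and $t\ge 1$, $$\bigl(F(t-1)-2\bigr)\,c(2^t n)=c\bigl(2^t n+2^{t-1}-1\bigr).$$
   Context: For $n\ge 0$, $c(n)=\sum_{i=0}^{n}\left(\binom{n}{i}\bmod 2\right)2^{i}$, the integer whose binary digits form the $n$-th row of Pascal's triangle modulo $2$. $F(j)=2^{2^j}+1$ is the $j$-th Fermat number. *)

From mathcomp Require Import all_boot.
Set Implicit Arguments. Unset Strict Implicit. Unset Printing Implicit Defensive.

Definition c (n : nat) : nat := \sum_(0 <= i < n.+1) ('C(n, i) %% 2) * 2 ^ i.

Definition F (j : nat) : nat := 2 ^ (2 ^ j) + 1.

From mathcomp Require Import all_boot zify.

(* Lucas's theorem for p = 2, applied to blocks of k binary digits, says that
   'C(n, m) is odd iff both 'C(n / 2^k, m / 2^k) and 'C(n mod 2^k, m mod 2^k)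
   are.  Hence the parity row of n factors: c(M 2^k + r) = P_M(2^(2^k)) c(r)
   for r < 2^k, where P_M(b) = pascal_mod2 b M is row M of Pascal's triangle
   mod 2 read in base b.  Row 2^k - 1 is entirely odd, so c(2^k - 1) = 2^(2^k) - 1 =
   F(k) - 2, and the two sides of the identity, with M = 2n and r = 0 resp.
   r = 2^k - 1, are both (F(k) - 2) P_M(2^(2^k)). *)

Lemma binSS n k : 'C(n.+2, k.+2) = 'C(n, k.+2) + 'C(n, k.+1).*2 + 'C(n, k).
Proof. by rewrite !binS -addnn !addnA. Qed.

Lemma odd_binSS n k : odd 'C(n.+2, k.+2) = odd 'C(n, k.+2) (+) odd 'C(n, k).
Proof. by rewrite binSS !oddD odd_double addbF. Qed.

Lemma odd_bin_double a b :
  odd 'C(a.*2, b.*2) = odd 'C(a, b) /\ ~~ odd 'C(a.*2, (b.*2).+1).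
Proof.
elim: a b => [|a IHa] [|b]; rewrite ?bin0 //.
  by rewrite bin1 odd_double.
rewrite !doubleS !odd_binSS -doubleS (IHa b.+1).1 (IHa b).1.
rewrite (negbTE (IHa b.+1).2) (negbTE (IHa b).2).
by rewrite binS oddD.
Qed.

Lemma odd_bin_half n m :
  odd 'C(n, m) = odd 'C(n./2, m./2) && odd 'C(odd n, odd m).
Proof.
rewrite -{1}(odd_double_half n) -{1}(odd_double_half m).
case: (odd n) (odd m) => [] []; move: (n./2) (m./2) => a b /=;
  rewrite ?add0n ?add1n ?andbT ?andbF.
- by rewrite binS oddD (negbTE (odd_bin_double a b).2) (odd_bin_double a b).1.
- case: b => [|b]; first by rewrite !bin0.
  rewrite doubleS binS oddD (negbTE (odd_bin_double a b).2) addbF.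
  by rewrite -doubleS (odd_bin_double a b.+1).1.
- exact/negbTE/(odd_bin_double a b).2.
- exact: (odd_bin_double a b).1.
Qed.

Lemma odd_bin_pow2 k n m :
  odd 'C(n, m) = odd 'C(n %/ 2 ^ k, m %/ 2 ^ k) && odd 'C(n %% 2 ^ k, m %% 2 ^ k).
Proof.
elim: k n m => [|k IHk] n m; first by rewrite expn0 !divn1 !modn1 bin0 andbT.
have even_pow : odd (2 ^ k.+1) = false by rewrite oddX.
rewrite odd_bin_half IHk -!divn2 -!divnMA -expnS !modn_divl -expnSr -andbA.
by rewrite -(odd_mod n even_pow) -(odd_mod m even_pow) !divn2 -odd_bin_half.
Qed.

Lemma odd_bin_pow2_pred k r : r < 2 ^ k -> odd 'C((2 ^ k).-1, r).
Proof.
elim: k r => [|k IHk] r; first by rewrite expn0 ltnS leqn0 => /eqP->.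
move=> lt_r; have pow_gt0 : 0 < 2 ^ k by rewrite expn_gt0.
have -> : (2 ^ k.+1).-1 = ((2 ^ k).-1.*2).+1 by rewrite expnS; lia.
rewrite odd_bin_half /= odd_double uphalf_double IHk; last first.
  by rewrite -divn2 ltn_divLR // -expnSr.
by case: (odd r).
Qed.

Definition pascal_mod2 (b n : nat) : nat :=
  \sum_(0 <= i < n.+1) ('C(n, i) %% 2) * b ^ i.

Lemma pascal_mod2_widen b n K : n < K ->
  pascal_mod2 b n = \sum_(0 <= i < K) ('C(n, i) %% 2) * b ^ i.
Proof.
move=> lt_nK; rewrite /pascal_mod2 [RHS](@big_cat_nat _ _ _ n.+1) //=.
rewrite [X in _ + X]big_nat_cond [X in _ + X]big1 ?addn0 // => i.
by rewrite andbT => /andP[lt_ni _]; rewrite bin_small.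
Qed.

Lemma big_nat_blocks (R : Type) (idx : R) (op : Monoid.law idx) m Q F :
  \big[op/idx]_(0 <= i < Q * m) F i
    = \big[op/idx]_(0 <= q < Q) \big[op/idx]_(0 <= r < m) F (q * m + r).
Proof.
rewrite big_nat_mul; apply: eq_bigr => q _.
by rewrite -{1}[q * m]add0n big_addn mulSn addnK; under eq_bigr do rewrite addnC.
Qed.

Lemma sum_pow2 m : \sum_(0 <= r < m) 2 ^ r = 2 ^ m - 1.
Proof.
elim: m => [|m IHm]; first by rewrite big_geq.
by rewrite big_nat_recr //= IHm expnS; have := expn_gt0 2 m; lia.
Qed.

Lemma c_pow2_pred k : c (2 ^ k).-1 = 2 ^ 2 ^ k - 1.
Proof.
rewrite /c prednK ?expn_gt0 // -sum_pow2.
by apply: eq_big_nat => r /andP[_ lt_r]; rewrite modn2 odd_bin_pow2_pred ?mul1n.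
Qed.

Lemma c_pow2_divmod k n :
  c n = pascal_mod2 (2 ^ 2 ^ k) (n %/ 2 ^ k) * c (n %% 2 ^ k).
Proof.
set m := 2 ^ k; have m_gt0 : 0 < m by rewrite expn_gt0.
have -> : c n = pascal_mod2 2 n by [].
have -> : c (n %% m) = pascal_mod2 2 (n %% m) by [].
rewrite (pascal_mod2_widen _ _ _ (ltn_ceil n m_gt0)) big_nat_blocks.
rewrite (pascal_mod2_widen _ _ _ (ltn_pmod n m_gt0)) /pascal_mod2 big_distrl /=.
apply: eq_bigr => q _; rewrite big_distrr /=.
apply: eq_big_nat => r /andP[_ lt_r].
rewrite !modn2 (odd_bin_pow2 k) -/m divnMDl // modnMDl (divn_small lt_r).
by rewrite (modn_small lt_r) addn0 -mulnb expnD (mulnC q m) expnM mulnACA.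
Qed.

Lemma c_pow2_mulD k M r : r < 2 ^ k ->
  c (M * 2 ^ k + r) = pascal_mod2 (2 ^ 2 ^ k) M * c r.
Proof.
move=> lt_r; have pow_gt0 : 0 < 2 ^ k by rewrite expn_gt0.
by rewrite (c_pow2_divmod k) divnMDl // (divn_small lt_r) addn0 modnMDl modn_small.
Qed.

Theorem lemma1 (n t : nat) (ht : 1 <= t) :
  (F (t - 1) - 2) * c (2 ^ t * n) = c (2 ^ t * n + 2 ^ (t - 1) - 1).
Proof.
case: t ht => [//|k] _; rewrite subn1 /=.
have pow_gt0 : 0 < 2 ^ k by rewrite expn_gt0.
have -> : 2 ^ k.+1 * n = n.*2 * 2 ^ k by rewrite expnS mulnAC mul2n.
rewrite -addnBA // subn1 c_pow2_mulD ?ltn_predL // c_pow2_pred.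
rewrite -[n.*2 * 2 ^ k]addn0 c_pow2_mulD // /c big_nat1 muln1 mulnC.
by rewrite /F addn1 subSS.
Qed.
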